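(* Let $f_0,f_1:X\to\mathbb{R}$ be Morse functions and $\mathcal{F},\mathcal{G}$ two $\mathcal{A}_\infty$-modules over $C_*(\Omega X)$. Let $\{m^0_{x,y}\}_{x,y\in\mathrm{Crit}(f_0)}$, $\{m^1_{x',y'}\}_{x',y'\in\mathrm{Crit}(f_1)}$ be twisting cocycles and $\{\tau_{x,y'}\in C_{|x|-|y'|}(\Omega X)\}$ a family with $\partial\tau_{x,y'}=\sum_z m^0_{x,z}\tau_{z,y'}-\sum_{w'}(-1)^{|x|-|w'|}\tau_{x,w'}m^1_{w',y'}$. Let $\Psi_{\mathcal{F}}:C_*(X,m^0,\mathcal{F})\to C_*(X,m^1,\mathcal{F})$ and $\Psi_{\mathcal{G}}:C_*(X,m^0,\mathcal{G})\to C_*(X,m^1,\mathcal{G})$ be the morphisms $\Psi=\sum_{n\ge1}\sum_{u=1}^n(-1)^{u-1}(\nu_{n+1}\otimes1)\tilde{\mathbf m}_{(1)}^{n-u}\tilde{\boldsymbol\tau}\tilde{\mathbf m}_{(0)}^{u-1}$ (with $\nu=\nu^{\mathcal{F}}$, resp. $\nu^{\mathcal{G}}$). Let $\boldsymbol\varphi:(\mathcal{F},\nu^{\mathcal{F}})\to(\mathcal{G},\nu^{\mathcal{G}})$ be a morphism of $\mathcal{A}_\infty$-modules and $\tilde\varphi_i=\sum_{n\ge0}(\varphi_{n+1}\otimes1)\tilde{\mathbf m}_{(i)}^n:C_*(X,m^i,\mathcal{F})\to C_*(X,m^i,\mathcal{G})$ for $i=0,1$. Then $\Psi_{\mathcal{G}}\circ\tilde\varphi_0$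 and $\tilde\varphi_1\circ\Psi_{\mathcal{F}}$ are chain homotopic.
   Context: $C_*(\Omega X)$: cubical chains of Moore based loops, an $\mathcal{A}_\infty$-algebra with $\mu_1$ the differential, $\mu_2$ Pontryagin product, $\mu_i=0$ for $i\ge3$; Koszul sign rule throughout. Twisting cocycles satisfy $\partial m_{x,y}=\sum_z(-1)^{|x|-|z|}m_{x,z}m_{z,y}$ with $m_{x,y}\in C_{|x|-|y|-1}(\Omega X)$. An $\mathcal{A}_\infty$-module $(\mathcal{A},\nu_n)$: $\nu_n:\mathcal{A}\otimes C_*(\Omega X)^{\otimes n-1}\to\mathcal{A}$ of degree $n-2$ with $\sum_{s+t=N,s\ge1}(-1)^{st}\nu_{t+1}(\nu_s\otimes1^{\otimes t})+\sum_{r+s+t=N,r,s\ge1}(-1)^{r+st}\nu_{r+t+1}(1^{\otimes r}\otimes\mu_s\otimes1^{\otimes t})=0$. A morphism $\boldsymbol\varphi$: maps $\varphi_n:\mathcal{F}\otimes C_*(\Omega X)^{\otimes n-1}\to\mathcal{G}$ of degree $n-1$ with $\sum_{s+t=N}(-1)^{st}\varphi_{t+1}(\nu^{\mathcal{F}}_s\otimes1^{\otimes t})+\sum_{r+s+t=N,r\ge1}(-1)^{r+st}\varphi_{r+t+1}(1^{\otimes r}\otimes\mu_s\otimes1^{\otimes t})=\sum_{s+t=N}(-1)^{(s+1)t}\nu^{\mathcal{G}}_{t+1}(\varphi_s\otimes1^{\otimes t})$. For a family $c=\{c_{x,y}\}$, $\mathbf c(x)=\sum_y c_{x,y}\otimes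 y$ and $\tilde{\mathbf c}(\alpha\otimes\gamma_1\otimes\cdots\otimes\gamma_k\otimes x)=(1^{\otimes k+1}\otimes\mathbf c)(\dots)$ on $\mathcal{A}\otimes TC_*(\Omega X)\otimes\mathbb{Z}\mathrm{Crit}$; $C_*(X,m^i,\mathcal{A})=\mathcal{A}\otimes\mathbb{Z}\mathrm{Crit}(f_i)$ with differential $\sum_{n\ge0}(\nu_{n+1}\otimes1)\tilde{\mathbf m}_{(i)}^n$. *)

(* Algebraic model of the setting of Proposition 5.19:
   C_*(Omega X) is modelled as an abstract nonnegatively graded A_infinity
   algebra over Z with mu_1 = differential, mu_2 = product, mu_i = 0 (i >= 3);
   Crit(f_i) is a finite set graded by the Morse index. *)
From HB Require Import structures.
From mathcomp Require Import all_boot all_order all_algebra.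
Set Implicit Arguments. Unset Strict Implicit. Unset Printing Implicit Defensive.
Import Order.TTheory GRing.Theory Num.Theory.
Local Open Scope ring_scope.

Definition sgz (n : int) : int := if odd (absz n) then -1 else 1.
Definition ssc (V : zmodType) (n : int) (v : V) : V := v *~ sgz n.

(* A graded abelian group: a family of subgroups V_d (d : int) of a common
   carrier, pairwise independent (the total group is their direct sum);
   hom d v means "v is homogeneous of degree d". *)
Definition graded (V : zmodType) (hom : int -> V -> Prop) : Prop :=
  (forall d, hom d 0) /\
  (forall d x y, hom d x -> hom d y -> hom d (x - y)) /\
  (forall d e x, d <> e -> hom d x -> hom e x -> x = 0).

Definition homs (V : zmodType) (hom : int -> V -> Prop) (qs : seq int)
  (cs : seq V) : Prop :=
  size qs = size cs /\
  forall i, (i < size cs)%N -> hom (nth 0 qs i) (nth 0 cs i).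

Definition muA (C : zmodType) (mu1 : C -> C) (mu2 : C -> C -> C)
  (cs : seq C) : C :=
  match cs with
  | [:: c] => mu1 c
  | [:: a; b] => mu2 a b
  | _ => 0
  end.

(* A_infinity relations  sum_{r+s+t=N} (-1)^{r+st} mu_{r+t+1}(1^r (x) mu_s (x) 1^t) = 0,
   Koszul sign rule: mu_s (degree s-2) passes the first r inputs. *)
Definition Ainf_alg (C : zmodType) (Chom : int -> C -> Prop)
  (mu1 : C -> C) (mu2 : C -> C -> C) : Prop :=
  graded Chom /\
  (forall d c, d < 0 -> Chom d c -> c = 0) /\
  (forall x y, mu1 (x + y) = mu1 x + mu1 y) /\
  (forall x y z, mu2 (x + y) z = mu2 x z + mu2 y z) /\
  (forall x y z, mu2 x (y + z) = mu2 x y + mu2 x z) /\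
  (forall d c, Chom d c -> Chom (d - 1) (mu1 c)) /\
  (forall d e a b, Chom d a -> Chom e b -> Chom (d + e) (mu2 a b)) /\
  (forall qs cs, homs Chom qs cs -> (0 < size cs)%N ->
     \sum_(r < size cs) \sum_(s < (size cs - r)%N)
        ssc ((r : nat)%:Z + (s.+1 * (size cs - r - s.+1))%N%:Z
              + ((s.+1)%:Z - 2) * \sum_(q <- take r qs) q)
            (muA mu1 mu2 (take r cs ++ muA mu1 mu2 (take s.+1 (drop r cs))
                                     :: drop (r + s.+1) cs)) = 0).

(* additivity in every argument (Z-multilinearity, i.e. a map out of the
   tensor product V (x) C^{(x) k}) *)
Definition multiadd (C V W : zmodType) (f : V -> seq C -> W) : Prop :=
  (forall cs a b, f (a + b) cs = f a cs + f b cs) /\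
  (forall a cs i c c', (i < size cs)%N ->
     f a (set_nth 0 cs i (c + c')) = f a (set_nth 0 cs i c) + f a (set_nth 0 cs i c')).

(* A_infinity module (F, nu): nu a [c_1;...;c_{n-1}] = nu_n(a (x) c_1 (x) ... (x) c_{n-1}),
   of degree n-2, satisfying for every N >= 1
   sum_{s+t=N,s>=1} (-1)^{st} nu_{t+1}(nu_s (x) 1^t)
   + sum_{r+s+t=N,r,s>=1} (-1)^{r+st} nu_{r+t+1}(1^r (x) mu_s (x) 1^t) = 0. *)
Definition Ainf_module (C : zmodType) (Chom : int -> C -> Prop)
  (mu1 : C -> C) (mu2 : C -> C -> C)
  (F : zmodType) (Fhom : int -> F -> Prop) (nu : F -> seq C -> F) : Prop :=
  graded Fhom /\ multiadd nu /\
  (forall p a qs cs, Fhom p a -> homs Chom qs cs ->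
     Fhom (p + \sum_(q <- qs) q + (size cs)%:Z - 1) (nu a cs)) /\
  (forall p a qs cs, Fhom p a -> homs Chom qs cs ->
     \sum_(s < (size cs).+1)
        ssc ((s.+1 * ((size cs).+1 - s.+1))%N%:Z) (nu (nu a (take s cs)) (drop s cs))
     + \sum_(j < size cs) \sum_(s < (size cs - j)%N)
        ssc ((j.+1)%:Z + (s.+1 * (size cs - j - s.+1))%N%:Z
              + ((s.+1)%:Z - 2) * (p + \sum_(q <- take j qs) q))
            (nu a (take j cs ++ muA mu1 mu2 (take s.+1 (drop j cs))
                              :: drop (j + s.+1) cs)) = 0).

(* Morphism of A_infinity modules: phi a [c_1..c_{n-1}] = phi_n(...), degree n-1. *)
Definition Ainf_morphism (C : zmodType) (Chom : int -> C -> Prop)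
  (mu1 : C -> C) (mu2 : C -> C -> C)
  (F : zmodType) (Fhom : int -> F -> Prop) (nuF : F -> seq C -> F)
  (G : zmodType) (Ghom : int -> G -> Prop) (nuG : G -> seq C -> G)
  (phi : F -> seq C -> G) : Prop :=
  multiadd phi /\
  (forall p a qs cs, Fhom p a -> homs Chom qs cs ->
     Ghom (p + \sum_(q <- qs) q + (size cs)%:Z) (phi a cs)) /\
  (forall p a qs cs, Fhom p a -> homs Chom qs cs ->
     \sum_(s < (size cs).+1)
        ssc ((s.+1 * ((size cs).+1 - s.+1))%N%:Z) (phi (nuF a (take s cs)) (drop s cs))
     + \sum_(j < size cs) \sum_(s < (size cs - j)%N)
        ssc ((j.+1)%:Z + (s.+1 * (size cs - j - s.+1))%N%:Z
              + ((s.+1)%:Z - 2) * (p + \sum_(q <- take j qs) q))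
            (phi a (take j cs ++ muA mu1 mu2 (take s.+1 (drop j cs))
                              :: drop (j + s.+1) cs))
     = \sum_(s < (size cs).+1)
        ssc ((s.+2 * ((size cs).+1 - s.+1))%N%:Z) (nuG (phi a (take s cs)) (drop s cs))).

Definition twisting_cocycle (C : zmodType) (Chom : int -> C -> Prop)
  (mu1 : C -> C) (mu2 : C -> C -> C)
  (Crit : finType) (ind : Crit -> nat) (m : Crit -> Crit -> C) : Prop :=
  (forall x y, Chom ((ind x)%:Z - (ind y)%:Z - 1) (m x y)) /\
  (forall x y, mu1 (m x y) =
     \sum_(z : Crit) ssc ((ind x)%:Z - (ind z)%:Z) (mu2 (m x z) (m z y))).

Definition tau_family (C : zmodType) (Chom : int -> C -> Prop)
  (mu1 : C -> C) (mu2 : C -> C -> C)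
  (C0 C1 : finType) (ind0 : C0 -> nat) (ind1 : C1 -> nat)
  (m0 : C0 -> C0 -> C) (m1 : C1 -> C1 -> C) (tau : C0 -> C1 -> C) : Prop :=
  (forall x y', Chom ((ind0 x)%:Z - (ind1 y')%:Z) (tau x y')) /\
  (forall x y', mu1 (tau x y') =
     \sum_(z : C0) mu2 (m0 x z) (tau z y')
     - \sum_(w' : C1) ssc ((ind0 x)%:Z - (ind1 w')%:Z) (mu2 (tau x w') (m1 w' y'))).

(* Elements of V (x) Z Crit are finite functions Crit -> V (alpha (x) x <-> the
   function with value alpha at x). Homogeneous of total degree p: *)
Definition deg_el (Crit : finType) (ind : Crit -> nat) (V : zmodType)
  (hom : int -> V -> Prop) (p : int) (v : {ffun Crit -> V}) : Prop :=
  forall x, hom (p - (ind x)%:Z) (v x).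

(* Koszul sign of m~^n applied to alpha (x) x of total degree p along the
   path x = z_0 -> z_1 -> ... -> z_n: the k-th application of m~ passes
   alpha (x) gamma_1 ... gamma_k, of degree p - k - |z_k|. *)
Definition msgn (Crit : finType) (ind : Crit -> nat) (p : int) (x : Crit)
  (zs : seq Crit) : int :=
  \sum_(k < size zs) (p - (k : nat)%:Z - (ind (nth x (x :: zs) k))%:Z).

(* sum_{n>=0} (f_{n+1} (x) 1) m~^n on the degree-p part of V (x) Z Crit.
   The series is finite (m_{x,y} = 0 unless |y| < |x|); paths have length
   < #|Crit|, so truncating at n <= #|Crit| is exact. *)
Definition tw (C : zmodType) (Crit : finType) (ind : Crit -> nat)
  (m : Crit -> Crit -> C) (V W : zmodType) (f : V -> seq C -> W) (p : int)
  (v : {ffun Crit -> V}) : {ffun Crit -> W} :=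
  [ffun y => \sum_(n < #|Crit|.+1) \sum_(x : Crit)
      \sum_(zs : n.-tuple Crit | last x zs == y)
        ssc (msgn ind p x zs) (f (v x) (pairmap m x zs))].

(* Psi = sum_{n>=1} sum_{u=1}^n (-1)^{u-1} (nu_{n+1} (x) 1) m~1^{n-u} tau~ m~0^{u-1}
   on the degree-p part (index shift: n+1, u+1 below). tau~ has degree 0,
   so carries no Koszul sign.  Finite: n <= #|C0| + #|C1| - 1 suffices. *)
Definition Psi (C : zmodType) (C0 C1 : finType) (ind0 : C0 -> nat)
  (ind1 : C1 -> nat) (m0 : C0 -> C0 -> C) (m1 : C1 -> C1 -> C)
  (tau : C0 -> C1 -> C) (V : zmodType) (nu : V -> seq C -> V) (p : int)
  (v : {ffun C0 -> V}) : {ffun C1 -> V} :=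
  [ffun y => \sum_(n < #|C0| + #|C1|) \sum_(u < n.+1) \sum_(x : C0)
      \sum_(zs : u.-tuple C0) \sum_(w : C1)
      \sum_(ws : (n - u)%N.-tuple C1 | last w ws == y)
        ssc ((u : nat)%:Z + msgn ind0 p x zs + msgn ind1 (p - (u : nat)%:Z) w ws)
            (nu (v x) (pairmap m0 x zs ++ tau (last x zs) w :: pairmap m1 w ws))].

From Pilot Require Import Defs.
From HB Require Import structures.
From mathcomp Require Import all_boot all_order all_algebra.
From mathcomp Require Import zify ring.
Set Implicit Arguments. Unset Strict Implicit. Unset Printing Implicit Defensive.
Import Order.TTheory GRing.Theory Num.Theory.
Local Open Scope ring_scope.

(* Glue m^0, m^1 and tau into a single twisting cocycle on Crit(f_0) + Crit(f_1),
   with the indices of Crit(f_0) shifted up by one: this is the mapping cone of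
   tau, and its twisted complex is the mapping cone of Psi.  For every twisting
   cocycle, the twisted map phi~ of an A_infinity-morphism is a chain map:
   expanding the composites along paths of critical points, the morphism
   relation holds path by path, and the leftover mu_1- and mu_2-terms cancel in
   pairs because mu_1 of an entry of m is expanded by the cocycle equation into
   products of two consecutive entries.  The off-diagonal component of phi~ on
   the cone reads Psi_G phi~_0 - phi~_1 Psi_F = d H + H d, where H is minus the
   map Psi built with phi in place of nu. *)

Lemma sgzD (a b : int) : Defs.sgz (a + b) = Defs.sgz a * Defs.sgz b.
Proof.
rewrite /Defs.sgz; have -> : odd (absz (a + b)) = odd (absz a) (+) odd (absz b).
  by case: (boolP (odd (absz a))); case: (boolP (odd (absz b)));
     case: (boolP (odd (absz (a + b)))) => //=; lia.
by case: (odd (absz a)); case: (odd (absz b)).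
Qed.

Section Signs.
Variable V : zmodType.
Implicit Types (u v : V) (a b n : int).

Lemma sscE n v : ssc n v = if odd (absz n) then - v else v.
Proof. by rewrite /ssc /Defs.sgz; case: ifP; rewrite ?mulrN1z ?mulr1z. Qed.

Lemma ssc_parity a b v : ~~ odd (absz (a - b)) -> ssc a v = ssc b v.
Proof.
by move=> h; rewrite !sscE; case: (boolP (odd (absz a))); case: (boolP (odd (absz b))) => //; lia.
Qed.

Lemma ssc0 v : ssc 0 v = v.
Proof. by rewrite sscE. Qed.

Lemma ssc1 v : ssc 1 v = - v.
Proof. by rewrite sscE. Qed.

Lemma sscA a b v : ssc a (ssc b v) = ssc (a + b) v.
Proof. by rewrite /ssc -mulrzA sgzD mulrC. Qed.

Lemma sscS n v : ssc (n + 1) v = - ssc n v.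
Proof. by rewrite -sscA ssc1 !sscE; case: ifP; rewrite ?opprK. Qed.

Lemma ssc_even a b d v : a - b = 2 * d -> ssc a v = ssc b v.
Proof. by move=> h; apply: ssc_parity; rewrite h; lia. Qed.

Lemma sscK n v : ssc n (ssc n v) = v.
Proof. by rewrite sscA (@ssc_parity _ 0) ?ssc0 //; lia. Qed.

Lemma sscr0 n : ssc n (0 : V) = 0.
Proof. by rewrite /ssc mul0rz. Qed.

Lemma sscrD n u v : ssc n (u + v) = ssc n u + ssc n v.
Proof. by rewrite /ssc mulrzDl. Qed.

Lemma sscrN n v : ssc n (- v) = - ssc n v.
Proof. by rewrite /ssc mulNrz. Qed.

Lemma ssc_sum n (I : Type) (r : seq I) (P : pred I) (F : I -> V) :
  ssc n (\sum_(i <- r | P i) F i) = \sum_(i <- r | P i) ssc n (F i).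
Proof. by rewrite /ssc mulrz_suml. Qed.

End Signs.

Section Additive.
Variables (V W : zmodType) (h : V -> W).
Hypothesis hD : {morph h : x y / x + y}.

Lemma additive0 : h 0 = 0.
Proof. by apply: (addrI (h 0)); rewrite -hD !addr0. Qed.

Lemma additiveN x : h (- x) = - h x.
Proof. by apply: (addrI (h x)); rewrite -hD !subrr additive0. Qed.

Lemma additive_sum (I : Type) (r : seq I) (P : pred I) (F : I -> V) :
  h (\sum_(i <- r | P i) F i) = \sum_(i <- r | P i) h (F i).
Proof. by elim/big_rec2: _ => [|i y1 y2 _ <-]; rewrite ?additive0 ?hD. Qed.

Lemma additive_ssc n x : h (ssc n x) = ssc n (h x).
Proof. by rewrite !sscE; case: ifP; rewrite ?additiveN. Qed.

End Additive.

Section Multiadditive.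
Variables (C V W : zmodType) (g : V -> seq C -> W).
Hypothesis Hg : multiadd g.

Lemma multiaddDl cs : {morph g^~ cs : a b / a + b}.
Proof. by case: Hg => h _ a b; apply: h. Qed.

Lemma multiaddD_mid a s t : {morph (fun c => g a (s ++ c :: t)) : c c' / c + c'}.
Proof.
have set_mid c0 c : set_nth 0 (s ++ c0 :: t) (size s) c = s ++ c :: t.
  by elim: s => [|b s IH] //=; rewrite IH.
move=> c c' /=; case: Hg => _ h.
by have := h a (s ++ 0 :: t) (size s) c c'; rewrite !set_mid size_cat /= addnS ltnS leq_addr; apply.
Qed.

Lemma multiadd_eq0 a cs : 0 \in cs -> g a cs = 0.
Proof. by case/splitPr=> s t; apply: (additive0 (multiaddD_mid a s t)). Qed.

End Multiadditive.

Fixpoint wsum (T : finType) (W : zmodType) (n : nat) (F : seq T -> W) : W :=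
  if n is n'.+1 then \sum_(z : T) wsum n' (fun s => F (z :: s)) else F [::].

Section WordSums.
Variables (T : finType) (W : zmodType).
Implicit Types (F G : seq T -> W).

Lemma eq_wsum n F G : (forall s, size s = n -> F s = G s) -> wsum n F = wsum n G.
Proof.
elim: n F G => [|n IH] F G h /=; first exact: h.
by apply: eq_bigr => z _; apply: IH => s hs; apply: h; rewrite /= hs.
Qed.

Lemma wsum_eq0 n F : (forall s, size s = n -> F s = 0) -> wsum n F = 0.
Proof.
elim: n F => [|n IH] F h /=; first exact: h.
by rewrite big1 // => z _; apply: IH => s hs; apply: h; rewrite /= hs.
Qed.

Lemma additive_wsum (W' : zmodType) (h : W -> W') : {morph h : x y / x + y} ->
  forall n F, h (wsum n F) = wsum n (fun s => h (F s)).
Proof.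
move=> hD n; elim: n => [|n IH] F //=.
by rewrite (additive_sum hD); apply: eq_bigr => z _.
Qed.

Lemma wsumD n F G : wsum n (fun s => F s + G s) = wsum n F + wsum n G.
Proof.
by elim: n F G => [|n IH] F G //=; rewrite -big_split /=; apply: eq_bigr => z _; apply: IH.
Qed.

Lemma wsum_ssc n k F : ssc k (wsum n F) = wsum n (fun s => ssc k (F s)).
Proof. exact/additive_wsum/sscrD. Qed.

Lemma wsum_sum (I : Type) (r : seq I) (P : pred I) n (F : I -> seq T -> W) :
  wsum n (fun s => \sum_(i <- r | P i) F i s) = \sum_(i <- r | P i) wsum n (F i).
Proof.
elim: n F => [|n IH] F //=; rewrite exchange_big /=.
by apply: eq_bigr => z _; rewrite -IH.
Qed.

Lemma exchange_wsum a b (F : seq T -> seq T -> W) :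
  wsum a (fun s => wsum b (F s)) = wsum b (fun t => wsum a (F^~ t)).
Proof. by elim: a F => [|a IH] F //=; rewrite [RHS]wsum_sum; apply: eq_bigr => z _; apply: IH. Qed.

Lemma wsum_cat a b F : wsum (a + b) F = wsum a (fun s => wsum b (fun t => F (s ++ t))).
Proof. by elim: a F => [|a IH] F //=; apply: eq_bigr => z _; apply: IH. Qed.

Lemma wsum_tuple n F : \sum_(s : n.-tuple T) F s = wsum n F.
Proof.
elim: n F => [|n IH] F /=.
  by rewrite (eq_bigr (fun _ => F [::])) ?sumr_const ?card_tuple // => t _; rewrite tuple0.
rewrite (reindex (fun p : T * n.-tuple T => [tuple of p.1 :: p.2])) /=; last first.
  exists (fun t : n.+1.-tuple T => (thead t, [tuple of behead t])).
    by move=> [z t] _ /=; congr pair; apply: val_inj.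
  by move=> t _; apply: val_inj => /=; case: t => [[|z s] //=].
rewrite -(pair_big xpredT xpredT (fun z (t : n.-tuple T) => F (z :: t))) /=.
by apply: eq_bigr => z _; rewrite (IH (fun s => F (z :: s))).
Qed.

End WordSums.

Section OrdinalSums.
Variable W : zmodType.

Lemma eq_sum_ord_trunc (F : nat -> W) B N1 N2 :
  (forall n, (B <= n)%N -> F n = 0) -> (B <= N1)%N -> (B <= N2)%N ->
  \sum_(n < N1) F n = \sum_(n < N2) F n.
Proof.
move=> h h1 h2; suff e N : (B <= N)%N -> \sum_(n < N) F n = \sum_(n < B) F n by rewrite !e.
move=> hN; rewrite -!(big_mkord xpredT) (big_cat_nat (n := B)) //=.
by rewrite [X in _ + X]big_nat_cond [X in _ + X]big1 ?addr0 // => i /andP[/andP[/h]].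
Qed.

Lemma sum_ord_triangle N (H : nat -> nat -> W) :
  \sum_(a < N) \sum_(b < N - a) H a b = \sum_(n < N) \sum_(k < n.+1) H k (n - k)%N.
Proof.
elim: N => [|N IH]; first by rewrite !big_ord0.
rewrite big_ord_recr [RHS]big_ord_recr /= -IH.
rewrite (eq_bigr (fun a : 'I_N => \sum_(b < N - a) H a b + H a (N - a)%N)); last first.
  by move=> a _; rewrite subSn ?big_ord_recr // ltnW.
by rewrite big_split /= -addrA; congr (_ + _); rewrite [RHS]big_ord_recr /= subnn subSnn big_ord1.
Qed.

Lemma sum_ord_antidiag N (H : nat -> nat -> W) :
  (forall a b, (N <= a + b)%N -> H a b = 0) ->
  \sum_(a < N) \sum_(b < N) H a b = \sum_(n < N) \sum_(k < n.+1) H k (n - k)%N.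
Proof.
move=> h; rewrite -sum_ord_triangle; apply: eq_bigr => a _.
apply: (@eq_sum_ord_trunc _ (N - a)) => // [n hn|]; last exact: leq_subr.
by apply: h; have := ltn_ord a; lia.
Qed.

Lemma sum_ifeq (T : finType) (a : T) (F : T -> W) :
  \sum_x (if a == x then F x else 0) = F a.
Proof. by rewrite -big_mkcond (eq_bigl (pred1 a)) ?big_pred1_eq // => x; rewrite eq_sym. Qed.

End OrdinalSums.

Section Graded.
Variables (V : zmodType) (hom : int -> V -> Prop).
Hypothesis Hg : graded hom.

Lemma hom0 d : hom d 0.
Proof. by case: Hg. Qed.

Lemma homB d x y : hom d x -> hom d y -> hom d (x - y).
Proof. by case: Hg => _ [h _]; apply: h. Qed.

Lemma homN d x : hom d x -> hom d (- x).
Proof. by move=> h; rewrite -sub0r; apply: homB => //; apply: hom0. Qed.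

Lemma homD d x y : hom d x -> hom d y -> hom d (x + y).
Proof. by move=> hx hy; rewrite -[y]opprK; apply/homB/homN. Qed.

Lemma hom_ssc d n x : hom d x -> hom d (ssc n x).
Proof. by rewrite sscE; case: ifP => // _; apply: homN. Qed.

Lemma hom_sum d (I : Type) (r : seq I) (P : pred I) (F : I -> V) :
  (forall i, P i -> hom d (F i)) -> hom d (\sum_(i <- r | P i) F i).
Proof. by move=> h; elim/big_rec: _ => [|i x Pi hx]; [apply: hom0 | apply/homD/hx/h]. Qed.

Lemma hom_eq d e x : hom d x -> d = e -> hom e x.
Proof. by move=> h <-. Qed.

Lemma hom_if d (b : bool) x : (b -> hom d x) -> hom d (if b then x else 0).
Proof. by case: b => h; [apply: h | apply: hom0]. Qed.

Lemma hom_wsum (T : finType) d n (F : seq T -> V) :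
  (forall s, size s = n -> hom d (F s)) -> hom d (wsum n F).
Proof.
elim: n F => [|n IH] F h /=; first exact: h.
by apply: hom_sum => z _; apply: IH => s hs; apply: h; rewrite /= hs.
Qed.

Lemma homs_cons q qs c cs : hom q c -> homs hom qs cs -> homs hom (q :: qs) (c :: cs).
Proof. by move=> hc [hs h]; split=> [|[|i] /= hi] //=; [rewrite hs | apply: h]. Qed.

Lemma homs_cat qs cs qs' cs' :
  homs hom qs cs -> homs hom qs' cs' -> homs hom (qs ++ qs') (cs ++ cs').
Proof.
move=> [h1 h2] [h3 h4]; split; first by rewrite !size_cat h1 h3.
move=> i; rewrite size_cat !nth_cat h1 => hi.
by case: ifP => hi'; [apply: h2 | apply: h4; lia].
Qed.

Lemma homs_pairmap (T : Type) (d : T -> T -> int) (M : T -> T -> V) x s :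
  (forall a b, hom (d a b) (M a b)) -> homs hom (pairmap d x s) (pairmap M x s).
Proof.
move=> h; elim: s x => [|z s IH] x /=; last exact: homs_cons.
by split=> // i.
Qed.

End Graded.

Section KoszulSigns.
Variables (T : finType) (ind : T -> nat).

Lemma msgn_nil p x : msgn ind p x [::] = 0.
Proof. by rewrite /msgn big_ord0. Qed.

Lemma msgn_cons p x z zs :
  msgn ind p x (z :: zs) = (p - (ind x)%:Z) + msgn ind (p - 1) z zs.
Proof.
rewrite /msgn /= big_ord_recl /= subr0; congr (_ + _); apply: eq_bigr => k _.
rewrite /bump /= add1n add0n (set_nth_default z x) /=; last exact: leq_trans (ltn_ord k) _.
by rewrite intS; lia.
Qed.

Lemma msgn_cat p x s t :
  msgn ind p x (s ++ t) = msgn ind p x s + msgn ind (p - (size s)%:Z) (last x s) t.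
Proof.
elim: s p x => [|z s IH] p x /=; first by rewrite msgn_nil add0r subr0.
by rewrite !msgn_cons IH addrA intS; congr (_ + msgn _ _ _ _); lia.
Qed.

Lemma msgn_shift p d x zs : msgn ind (p + d) x zs = msgn ind p x zs + d * (size zs)%:Z.
Proof.
elim: zs p x => [|z zs IH] p x /=; first by rewrite !msgn_nil mulr0 addr0.
by rewrite !msgn_cons (_ : p + d - 1 = (p - 1) + d) ?IH; lia.
Qed.

End KoszulSigns.

Lemma msgn_indS (T : finType) (ind : T -> nat) p x zs :
  msgn (fun t => (ind t).+1) p x zs = msgn ind (p - 1) x zs.
Proof.
elim: zs p x => [|z zs IH] p x /=; first by rewrite !msgn_nil.
by rewrite !msgn_cons IH intS; congr (_ + _); lia.
Qed.

Lemma msgn_map (T T' : finType) (ind : T -> nat) (ind' : T' -> nat) (f : T -> T') p x zs :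
  (forall t, ind' (f t) = ind t) -> msgn ind' p (f x) (map f zs) = msgn ind p x zs.
Proof.
move=> h; elim: zs p x => [|z zs IH] p x /=; first by rewrite !msgn_nil.
by rewrite !msgn_cons IH h.
Qed.

Lemma pairmap_map (T T' U : Type) (f : T -> T') (M : T' -> T' -> U) x s :
  pairmap M (f x) (map f s) = pairmap (fun a b => M (f a) (f b)) x s.
Proof. by elim: s x => [|z s IH] x //=; rewrite IH. Qed.

Lemma sum_pairmap_deg (T : Type) (ind : T -> nat) x s :
  \sum_(q <- pairmap (fun a b => (ind a)%:Z - (ind b)%:Z - 1) x s) q
  = (ind x)%:Z - (ind (last x s))%:Z - (size s)%:Z.
Proof.
elim: s x => [|z s IH] x /=; first by rewrite big_nil; lia.
by rewrite big_cons IH intS; lia.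
Qed.

Section Twisted.
Variables (C : zmodType) (Chom : int -> C -> Prop) (mu1 : C -> C) (mu2 : C -> C -> C).
Hypothesis HC : Ainf_alg Chom mu1 mu2.
Variables (T : finType) (ind : T -> nat) (M : T -> T -> C).
Hypothesis HMdeg : forall x y, Chom ((ind x)%:Z - (ind y)%:Z - 1) (M x y).

(* Nonzero entries of [M] strictly decrease the index, so no path of length
   [#|T|] avoids a zero entry. *)
Lemma mem0_pairmap x zs : (#|T| <= size zs)%N -> 0 \in pairmap M x zs.
Proof.
move=> hs; apply/negPn/negP => h0.
have M_eq0 a b : (ind a <= ind b)%N -> M a b = 0.
  by case: HC => _ [neg _] hab; apply: neg (HMdeg a b); lia.
have hp : path (fun a b => ind b < ind a)%N x zs.
  elim: zs x h0 {hs} => [|z zs IH] x //=; rewrite in_cons negb_or => /andP[h1 h2].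
  by rewrite IH // andbT ltnNge; apply: contra h1 => /M_eq0 ->.
have hu : uniq (x :: zs).
  by apply: (sorted_uniq (leT := fun a b => ind b < ind a)%N) => // [a b c|a] /=;
     [move=> /[swap]; apply: ltn_trans | rewrite ltnn].
by have := max_card (mem (x :: zs)); rewrite (card_uniqP hu) /= ltnNge hs.
Qed.

Definition twisted N (V W : zmodType) (g : V -> seq C -> W) p (v : T -> V) y : W :=
  \sum_(n < N) \sum_x wsum n (fun zs => if last x zs == y
      then ssc (msgn ind p x zs) (g (v x) (pairmap M x zs)) else 0).

Lemma tw_twisted (V W : zmodType) (g : V -> seq C -> W) p (v : {ffun T -> V}) y :
  tw ind M g p v y = twisted #|T|.+1 g p v y.
Proof.
rewrite /tw ffunE /twisted; apply: eq_bigr => n _; apply: eq_bigr => x _.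
by rewrite big_mkcond /= (wsum_tuple n (fun zs => if last x zs == y
      then ssc (msgn ind p x zs) (g (v x) (pairmap M x zs)) else 0)).
Qed.

Section TwistedMaps.
Variables (V W : zmodType) (g : V -> seq C -> W).
Hypothesis Hg : multiadd g.

Lemma twisted_trunc N p v y : (#|T| < N)%N -> twisted N g p v y = twisted #|T|.+1 g p v y.
Proof.
move=> hN; rewrite /twisted.
apply: (eq_sum_ord_trunc (F := fun n => \sum_x wsum n (fun zs => if last x zs == y
      then ssc (msgn ind p x zs) (g (v x) (pairmap M x zs)) else 0)) (B := #|T|));
  [move=> n hn | exact: ltnW hN | exact: leqnSn].
apply: big1 => x _; apply: wsum_eq0 => s hs; case: ifP => // _.
by rewrite multiadd_eq0 ?sscr0 // mem0_pairmap ?hs.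
Qed.

Lemma tw_twisted_trunc N p (v : {ffun T -> V}) y :
  (#|T| < N)%N -> tw ind M g p v y = twisted N g p v y.
Proof. by move=> hN; rewrite tw_twisted twisted_trunc. Qed.

Lemma eq_twisted N p v w y : (forall x, v x = w x) -> twisted N g p v y = twisted N g p w y.
Proof. by move=> h; apply: eq_bigr => n _; apply: eq_bigr => x _; rewrite h. Qed.

Lemma twisted_ssc N p k v y :
  twisted N g p (fun x => ssc k (v x)) y = ssc k (twisted N g p v y).
Proof.
rewrite /twisted ssc_sum; apply: eq_bigr => n _; rewrite ssc_sum; apply: eq_bigr => x _.
rewrite wsum_ssc; apply: eq_wsum => s _; case: ifP => _; last by rewrite sscr0.
by rewrite (additive_ssc (multiaddDl Hg _)) !sscA addrC.
Qed.

Lemma twistedN N p v y : twisted N g p (fun x => - v x) y = - twisted N g p v y.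
Proof. by rewrite -ssc1 -twisted_ssc; apply: eq_twisted => x; rewrite ssc1. Qed.

Lemma twisted0 N p y : twisted N g p (fun _ => 0) y = 0.
Proof.
rewrite /twisted big1 // => n _; rewrite big1 // => x _; apply: wsum_eq0 => s _.
by rewrite (additive0 (multiaddDl Hg _)) sscr0; case: ifP.
Qed.

End TwistedMaps.

Section Composition.
Variables (N : nat) (U V W : zmodType) (g1 : V -> seq C -> U) (g2 : U -> seq C -> W).
Hypotheses (H1 : multiadd g1) (H2 : multiadd g2).
Variables (p q : int) (v : T -> V) (y : T).

Definition pair_term x x' zs1 zs2 :=
  if (last x zs1 == x') && (last x' zs2 == y) then
    ssc (msgn ind p x zs1 + msgn ind q x' zs2) (g2 (g1 (v x) (pairmap M x zs1)) (pairmap M x' zs2))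
  else 0.

(* [(size s - k) * (k + q - p)] converts the Koszul signs of the last
   [size s - k] steps, taken at degree [q], to those taken at degree [p]. *)
Definition split_term x k s :=
  if last x s == y then
    ssc (msgn ind p x s + (size s - k)%N%:Z * (k%:Z + q - p))
      (g2 (g1 (v x) (take k (pairmap M x s))) (drop k (pairmap M x s)))
  else 0.

Lemma twisted_comp_pairs :
  twisted N g2 q (twisted N g1 p v) y = \sum_(n2 < N) \sum_(n1 < N) \sum_x \sum_x'
    wsum n2 (fun zs2 => wsum n1 (fun zs1 => pair_term x x' zs1 zs2)).
Proof.
apply: eq_bigr => n2 _.
transitivity (\sum_x' \sum_(n1 < N) \sum_x
    wsum n2 (fun zs2 => wsum n1 (fun zs1 => pair_term x x' zs1 zs2))); last first.
  by rewrite exchange_big; apply: eq_bigr => n1 _; apply: exchange_big.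
apply: eq_bigr => x' _; under [RHS]eq_bigr do rewrite -wsum_sum.
rewrite -wsum_sum; apply: eq_wsum => zs2 _.
case: (boolP (last x' zs2 == y)) => hy; last first.
  rewrite big1 // => n1 _; rewrite big1 // => x _.
  by apply: wsum_eq0 => zs1 _; rewrite /pair_term (negbTE hy) andbF.
pose h a := ssc (msgn ind q x' zs2) (g2 a (pairmap M x' zs2)).
have hD : {morph h : a b / a + b} by move=> a b; rewrite /h (multiaddDl H2) sscrD.
rewrite -/(h _) (additive_sum hD); apply: eq_bigr => n1 _.
rewrite (additive_sum hD); apply: eq_bigr => x _; rewrite (additive_wsum hD).
apply: eq_wsum => zs1 _; rewrite /pair_term hy andbT; case: ifP => _.
  by rewrite /h (additive_ssc (multiaddDl H2 _)) sscA addrC.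
by rewrite /h (additive0 (multiaddDl H2 _)) sscr0.
Qed.

Lemma sum_pair_term x n1 n2 :
  \sum_x' wsum n2 (fun zs2 => wsum n1 (fun zs1 => pair_term x x' zs1 zs2))
  = wsum (n1 + n2) (split_term x n1).
Proof.
rewrite wsum_cat; under eq_bigr do rewrite exchange_wsum.
rewrite -wsum_sum; apply: eq_wsum => zs1 hz1; rewrite -wsum_sum; apply: eq_wsum => zs2 hz2.
rewrite (eq_bigr (fun x' => if last x zs1 == x' then
    (if last x' zs2 == y then ssc (msgn ind p x zs1 + msgn ind q x' zs2)
      (g2 (g1 (v x) (pairmap M x zs1)) (pairmap M x' zs2)) else 0) else 0)); last first.
  by move=> x' _; rewrite /pair_term; case: (last x zs1 == x').
rewrite sum_ifeq /split_term last_cat; case: ifP => // _.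
rewrite pairmap_cat take_size_cat ?size_pairmap // drop_size_cat ?size_pairmap //.
congr ssc; rewrite msgn_cat size_cat hz1 hz2 addKn.
have := msgn_shift ind (p - n1%:Z) (q - p + n1%:Z) (last x zs1) zs2.
by rewrite (_ : p - n1%:Z + (q - p + n1%:Z) = q) ?hz2 => [->|]; [ring | lia].
Qed.

Lemma twisted_comp : (#|T| < N)%N ->
  twisted N g2 q (twisted N g1 p v) y = \sum_x \sum_(n < N) wsum n (fun zs =>
    if last x zs == y then
      ssc (msgn ind p x zs) (\sum_(k < n.+1) ssc ((n - k)%N%:Z * ((k : nat)%:Z + q - p))
        (g2 (g1 (v x) (take k (pairmap M x zs))) (drop k (pairmap M x zs))))
    else 0).
Proof.
move=> hN; rewrite twisted_comp_pairs exchange_big /=.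
rewrite (eq_bigr (fun n1 : 'I_N => \sum_x \sum_(n2 < N) wsum (n1 + n2) (split_term x n1)));
  last by move=> n1 _; rewrite exchange_big; apply: eq_bigr => x _; apply: eq_bigr => n2 _;
          apply: sum_pair_term.
rewrite exchange_big; apply: eq_bigr => x _.
rewrite (sum_ord_antidiag (H := fun a b => wsum (a + b) (split_term x a))); last first.
  move=> a b hab; apply: wsum_eq0 => s hs; rewrite /split_term; case: ifP => // _.
  have : 0 \in pairmap M x s by apply: mem0_pairmap; rewrite hs (leq_trans (ltnW hN) hab).
  rewrite -{1}(cat_take_drop a (pairmap M x s)) mem_cat => /orP[h0|h0].
    by rewrite (multiadd_eq0 H1 _ h0) (additive0 (multiaddDl H2 _)) sscr0.
  by rewrite (multiadd_eq0 H2 _ h0) sscr0.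
apply: eq_bigr => n _.
rewrite (eq_bigr (fun k : 'I_n.+1 => wsum n (split_term x k))); last first.
  by move=> k _; rewrite subnKC // -ltnS.
rewrite -wsum_sum; apply: eq_wsum => s hs; rewrite /split_term; case: ifP => _.
  by rewrite ssc_sum; apply: eq_bigr => k _; rewrite sscA hs.
by rewrite big1.
Qed.

End Composition.
End Twisted.

Section SeqMid.
Variable X : Type.
Implicit Types (s t : seq X) (c d : X).

Lemma nth_mid d s t c j : size s = j -> nth d (s ++ c :: t) j = c.
Proof. by move=> <-; rewrite nth_cat ltnn subnn. Qed.

Lemma nth_mid2 d s t c c' j : size s = j -> nth d (s ++ c :: c' :: t) j.+1 = c'.
Proof. by move=> <-; rewrite nth_cat ltnNge leqnSn /= subSnn. Qed.

Lemma drop_mid s t c j : size s = j -> drop j.+1 (s ++ c :: t) = t.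
Proof. by move=> <-; rewrite drop_cat ltnNge leqnSn /= subSnn /= drop0. Qed.

Lemma drop_mid2 s t c c' j : size s = j -> drop j.+2 (s ++ c :: c' :: t) = t.
Proof. by move=> <-; rewrite drop_cat ltnNge (leq_trans (leqnSn _)) //= -addn2 addKn /= drop0. Qed.

End SeqMid.

Section AinfAlgebra.
Variables (C : zmodType) (Chom : int -> C -> Prop) (mu1 : C -> C) (mu2 : C -> C -> C).
Hypothesis HC : Ainf_alg Chom mu1 mu2.

Lemma Ainf_graded : graded Chom.
Proof. by case: HC. Qed.

Lemma mu1D : {morph mu1 : a b / a + b}.
Proof. by case: HC => _ [_ [h _]]. Qed.

Lemma mu2Dl c : {morph mu2^~ c : a b / a + b}.
Proof. by case: HC => _ [_ [_ [h _]]] a b; apply: h. Qed.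

Lemma mu2Dr c : {morph mu2 c : a b / a + b}.
Proof. by case: HC => _ [_ [_ [_ [h _]]]] a b; apply: h. Qed.

Lemma mu2_0l c : mu2 0 c = 0.
Proof. exact: additive0 (mu2Dl c). Qed.

Lemma mu2_0r c : mu2 c 0 = 0.
Proof. exact: additive0 (mu2Dr c). Qed.

End AinfAlgebra.

Definition mu_sum (C V W : zmodType) (mu1 : C -> C) (mu2 : C -> C -> C) (g : V -> seq C -> W)
  (a : V) (pa : int) (qs : seq int) (cs : seq C) : W :=
  \sum_(j < size cs) \sum_(s < (size cs - j)%N)
        ssc ((j.+1)%:Z + (s.+1 * (size cs - j - s.+1))%N%:Z
              + ((s.+1)%:Z - 2) * (pa + \sum_(q <- take j qs) q))
            (g a (take j cs ++ muA mu1 mu2 (take s.+1 (drop j cs))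
                              :: drop (j + s.+1) cs)).

Section MuSum.
Variables (C : zmodType) (Chom : int -> C -> Prop) (mu1 : C -> C) (mu2 : C -> C -> C).
Hypothesis HC : Ainf_alg Chom mu1 mu2.
Variables (T : finType) (ind : T -> nat) (M : T -> T -> C).
Hypothesis HM : twisting_cocycle Chom mu1 mu2 ind M.
Variables (V W : zmodType) (g : V -> seq C -> W).
Hypothesis Hg : multiadd g.

Let dM (a b : T) := (ind a)%:Z - (ind b)%:Z - 1.

Lemma mu_sum_split a pa qs cs :
  mu_sum mu1 mu2 g a pa qs cs = \sum_(j < size cs)
    (ssc ((j.+1)%:Z + (size cs - j - 1)%N%:Z - (pa + \sum_(q <- take j qs) q))
        (g a (take j cs ++ mu1 (nth 0 cs j) :: drop j.+1 cs))
     + if (j.+1 < size cs)%N then ssc (j.+1)%:Z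
        (g a (take j cs ++ mu2 (nth 0 cs j) (nth 0 cs j.+1) :: drop j.+2 cs)) else 0).
Proof.
apply: eq_bigr => j _; have hj := ltn_ord j.
case e : (size cs - j)%N => [|m]; first by lia.
rewrite big_ord_recl /= (drop_nth 0) // /= addn1; congr (_ + _).
  by rewrite take0 /=; apply: ssc_parity; rewrite mul1n; lia.
case: m e => [|m] e; first by rewrite big_ord0; case: ifP => //; lia.
have hj1 : (j.+1 < size cs)%N by lia.
rewrite hj1 big_ord_recl /= (drop_nth 0 hj1) /= addn2 [X in _ + X]big1 ?addr0.
  by rewrite /bump /= add0n take0 /=; apply: ssc_parity; lia.
move=> s _; rewrite multiadd_eq0 ?sscr0 //.
have hj2 : (j.+2 < size cs)%N by have := ltn_ord s; lia.
by rewrite (drop_nth 0 hj2) /bump /= mem_cat in_cons eqxx orbT.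
Qed.

Variables (a : V) (x y : T) (p : int).

Definition mu1_term n j zs := let cs := pairmap M x zs in
  if last x zs == y then
    ssc (msgn ind p x zs + ((j.+1)%:Z + (n - j - 1)%N%:Z
                             - (p - (ind x)%:Z + \sum_(q <- take j (pairmap dM x zs)) q)))
      (g a (take j cs ++ mu1 (nth 0 cs j) :: drop j.+1 cs))
  else 0.

Definition mu2_term n j zs := let cs := pairmap M x zs in
  if (last x zs == y) && (j.+1 < n)%N then
    ssc (msgn ind p x zs + (j.+1)%:Z)
      (g a (take j cs ++ mu2 (nth 0 cs j) (nth 0 cs j.+1) :: drop j.+2 cs))
  else 0.

(* Expanding [mu1 (M z_j z_{j+1})] by the cocycle relation inserts a new vertex. *)
Lemma wsum_mu1_term n j : (j < n)%N -> wsum n (mu1_term n j) = - wsum n.+1 (mu2_term n.+1 j).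
Proof.
move=> hj; have hNw := @additive_wsum T W W -%R (@opprD W).
have [k ->] : exists k, n = (j + k.+1)%N by exists (n - j - 1)%N; lia.
have hjk : (j.+1 < j + k.+2)%N by lia.
rewrite -addnS !wsum_cat hNw; apply: eq_wsum => l hl /=.
rewrite exchange_big -sumrN; apply: eq_bigr => z _.
rewrite -wsum_sum hNw; apply: eq_wsum => r hr.
rewrite /mu1_term /mu2_term /= !last_cat /=; under [in RHS]eq_bigr do rewrite last_cat /=.
case: ifP => hy /=; last by rewrite big1 ?oppr0.
have hl' : size (pairmap M x l) = j by rewrite size_pairmap.
rewrite -sumrN !pairmap_cat /= (take_size_cat _ hl') (nth_mid _ _ _ hl') (drop_mid _ _ hl').
case: HM => _ ->; rewrite (additive_sum (multiaddD_mid Hg _ _ _)) ssc_sum.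
apply: eq_bigr => w _; rewrite pairmap_cat /= (take_size_cat _ hl') (nth_mid _ _ _ hl').
rewrite (nth_mid2 _ _ _ _ hl') (drop_mid2 _ _ _ hl') hjk.
rewrite (additive_ssc (multiaddD_mid Hg _ _ _)) sscA -sscS; apply: ssc_parity.
rewrite take_size_cat ?size_pairmap // sum_pairmap_deg hl !msgn_cat /= !msgn_cons hl.
by rewrite (msgn_shift ind (p - j%:Z - 1) (-1) z r) hr; lia.
Qed.

Definition mu2_total n := \sum_(j < n) wsum n (mu2_term n j).

Lemma mu2_total_long N : (#|T| < N)%N -> mu2_total N = 0.
Proof.
move=> hN; apply: big1 => j _; apply: wsum_eq0 => zs hz.
rewrite /mu2_term; case: ifP => // /andP[_ hj].
set cs := pairmap M x zs.
have h0 : 0 \in cs by apply: (mem0_pairmap HC (proj1 HM)); rewrite hz ltnW.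
have hs : size cs = N by rewrite size_pairmap.
have hj1 : (j.+1 < size cs)%N by rewrite hs.
have hj0 : (j < size cs)%N by apply: ltnW.
rewrite -(cat_take_drop j cs) mem_cat (drop_nth 0 hj0) (drop_nth 0 hj1) !in_cons in h0.
rewrite multiadd_eq0 ?sscr0 // mem_cat in_cons.
case/or3P: h0 => [->|/eqP <-|/orP[/eqP <-|->]]; by rewrite ?(mu2_0l HC) ?(mu2_0r HC) ?eqxx ?orbT.
Qed.

Lemma twisted_mu_sum_eq0 N : (#|T| < N)%N ->
  \sum_(n < N) wsum n (fun zs => if last x zs == y then ssc (msgn ind p x zs)
     (mu_sum mu1 mu2 g a (p - (ind x)%:Z) (pairmap dM x zs) (pairmap M x zs)) else 0) = 0.
Proof.
move=> hN.
have mu1_mu2 n : wsum n (fun zs => if last x zs == y then ssc (msgn ind p x zs)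
     (mu_sum mu1 mu2 g a (p - (ind x)%:Z) (pairmap dM x zs) (pairmap M x zs)) else 0)
   = \sum_(j < n) wsum n (mu1_term n j) + mu2_total n.
  rewrite /mu2_total -!wsum_sum -wsumD; apply: eq_wsum => zs hz.
  rewrite /mu1_term /mu2_term /=; case: ifP => hy; last by rewrite !big1 ?addr0.
  rewrite mu_sum_split size_pairmap hz ssc_sum -big_split; apply: eq_bigr => j _ /=.
  by rewrite sscrD; case: ifP; rewrite ?sscr0 ?sscA.
have telescope n : \sum_(j < n) wsum n (mu1_term n j) = - mu2_total n.+1.
  rewrite /mu2_total big_ord_recr /= [X in _ + X](_ : _ = 0) ?addr0; last first.
    by apply: (@wsum_eq0 _ _ n.+1) => zs _; rewrite /mu2_term ltnn andbF.
  by rewrite -sumrN; apply: eq_bigr => j _; apply: wsum_mu1_term.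
rewrite (eq_bigr (fun n : 'I_N => - (mu2_total n.+1 - mu2_total n))); last first.
  by move=> n _; rewrite mu1_mu2 telescope opprB addrC.
rewrite sumrN -(big_mkord xpredT (fun n => mu2_total n.+1 - mu2_total n)) telescope_sumr //.
by rewrite mu2_total_long // /mu2_total big_ord0 subr0 oppr0.
Qed.

End MuSum.

Section ChainMap.
Variables (C : zmodType) (Chom : int -> C -> Prop) (mu1 : C -> C) (mu2 : C -> C -> C).
Hypothesis HC : Ainf_alg Chom mu1 mu2.
Variables (T : finType) (ind : T -> nat) (M : T -> T -> C).
Hypothesis HM : twisting_cocycle Chom mu1 mu2 ind M.
Variables (F : zmodType) (Fhom : int -> F -> Prop) (nuF : F -> seq C -> F)
  (G : zmodType) (Ghom : int -> G -> Prop) (nuG : G -> seq C -> G)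
  (phi : F -> seq C -> G).
Hypotheses (HnuF : multiadd nuF) (HnuG : multiadd nuG).
Hypothesis Hphi : Ainf_morphism Chom mu1 mu2 Fhom nuF Ghom nuG phi.

Lemma twisted_chain_map N p (v : T -> F) y :
  (#|T| < N)%N -> (forall x, Fhom (p - (ind x)%:Z) (v x)) ->
  twisted ind M N nuG p (twisted ind M N phi p v) y
  = twisted ind M N phi (p - 1) (twisted ind M N nuF p v) y.
Proof.
have Hph : multiadd phi by case: Hphi.
have HMdeg := proj1 HM.
move=> hN hv; rewrite (twisted_comp HC HMdeg Hph HnuG) // (twisted_comp HC HMdeg HnuF Hph) //.
apply: eq_bigr => x _.
rewrite -[RHS]addr0 -[X in _ = _ + X](twisted_mu_sum_eq0 HC HM Hph (v x) x y p hN) -big_split.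
apply: eq_bigr => n _ /=; rewrite -wsumD; apply: eq_wsum => zs hz /=.
case: ifP => hy; last by rewrite addr0.
rewrite -sscrD; congr ssc.
set cs := pairmap M x zs.
have hcs : size cs = n by rewrite size_pairmap.
have := (proj2 (proj2 Hphi)) _ _ _ _ (hv x) (homs_pairmap x zs HMdeg).
rewrite -/cs hcs => hrel.
transitivity (\sum_(k < n.+1)
    ssc ((k.+2 * (n.+1 - k.+1))%N%:Z) (nuG (phi (v x) (take k cs)) (drop k cs))).
  apply: eq_bigr => k _; apply: (ssc_even (d := - (n - k)%N%:Z)).
  by rewrite subSS PoszM -addn2 PoszD; ring.
rewrite -hrel; congr (_ + _); last by rewrite /mu_sum hcs.
apply: eq_bigr => k _.
by apply: (ssc_even (d := (n - k)%N%:Z)); rewrite subSS PoszM intS; ring.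
Qed.

End ChainMap.

Section ConePaths.
Variables (C0 C1 : finType) (W : zmodType).

Definition is_inr (t : C0 + C1) : bool := if t is inr _ then true else false.

Fixpoint cone_path (s : seq (C0 + C1)) : bool :=
  match s with
  | [::] => true
  | inl _ :: s' => cone_path s'
  | inr _ :: s' => all is_inr s'
  end.

Lemma wsum_inr n (G : seq (C0 + C1) -> W) :
  (forall s, size s = n -> ~~ all is_inr s -> G s = 0) ->
  wsum n G = wsum n (fun b => G (map inr b)).
Proof.
elim: n G => [|n IH] G h //=.
rewrite big_sumType /= [X in X + _]big1 ?add0r; last first.
  by move=> x _; apply: wsum_eq0 => s hs; apply: h; rewrite /= ?hs.
by apply: eq_bigr => z _; rewrite IH // => s hs hr; apply: h; rewrite /= ?hs.
Qed.

Lemma wsum_inl_inr n (G : seq (C0 + C1) -> W) :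
  (forall s, size s = n -> ~~ cone_path s -> G s = 0) ->
  wsum n G = \sum_(u < n.+1) wsum u (fun a => wsum (n - u) (fun b => G (map inl a ++ map inr b))).
Proof.
elim: n G => [|n IH] G h; first by rewrite big_ord1.
rewrite /= big_sumType /= big_ord_recl /= addrC; congr (_ + _).
  by apply: eq_bigr => z _; rewrite wsum_inr // => s hs hr; apply: h; rewrite /= ?hs.
transitivity (\sum_x \sum_(u < n.+1)
    wsum u (fun a => wsum (n - u) (fun b => G (inl x :: (map inl a ++ map inr b))))).
  by apply: eq_bigr => x _; apply: IH => s hs hok; apply: h; rewrite /= ?hs.
by rewrite exchange_big; apply: eq_bigr => u _ /=; rewrite /bump /= add1n.
Qed.

End ConePaths.

Section Cone.
Variables (C : zmodType) (Chom : int -> C -> Prop) (mu1 : C -> C) (mu2 : C -> C -> C).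
Hypothesis HC : Ainf_alg Chom mu1 mu2.
Variables (C0 C1 : finType) (ind0 : C0 -> nat) (ind1 : C1 -> nat)
  (m0 : C0 -> C0 -> C) (m1 : C1 -> C1 -> C) (tau : C0 -> C1 -> C).

(* The mapping cone of [tau]: [Crit f0] shifted up by one, [m0] and [m1] on
   the diagonal and [(-1)^|x| tau] below it. *)
Definition cone_ind (t : C0 + C1) : nat :=
  match t with inl x => (ind0 x).+1 | inr y => ind1 y end.

Definition cone_m (a b : C0 + C1) : C :=
  match a, b with
  | inl x, inl z => m0 x z
  | inl x, inr y => ssc (ind0 x) (tau x y)
  | inr y, inr w => m1 y w
  | inr _, inl _ => 0
  end.

Lemma cone_twisting_cocycle :
  twisting_cocycle Chom mu1 mu2 ind0 m0 -> twisting_cocycle Chom mu1 mu2 ind1 m1 ->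
  tau_family Chom mu1 mu2 ind0 ind1 m0 m1 tau ->
  twisting_cocycle Chom mu1 mu2 cone_ind cone_m.
Proof.
move=> [Hm0deg Hm0] [Hm1deg Hm1] [Htaudeg Htau]; have Hgr := Ainf_graded HC.
split=> [[x|x] [z|z] /=|].
- by apply: (hom_eq (Hm0deg x z)); rewrite !intS; lia.
- by apply: (hom_ssc Hgr); apply: (hom_eq (Htaudeg x z)); rewrite intS; lia.
- exact: (hom0 Hgr).
- exact: Hm1deg.
case=> [x|x] [z|z]; rewrite big_sumType /=.
- rewrite [X in _ + X]big1 ?addr0 => [|w _]; last by rewrite (mu2_0r HC) ?sscr0.
  by rewrite Hm0; apply: eq_bigr => w _; apply: ssc_parity; rewrite !intS; lia.
- rewrite (additive_ssc (mu1D HC)) Htau sscrD sscrN !ssc_sum; congr (_ + _).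
    apply: eq_bigr => w _; rewrite (additive_ssc (mu2Dr HC _)) sscA.
    by apply: ssc_parity; rewrite !intS; lia.
  rewrite -sumrN; apply: eq_bigr => w _; rewrite (additive_ssc (mu2Dl HC _)) !sscA -sscS.
  by apply: ssc_parity; rewrite !intS; lia.
- rewrite (additive0 (mu1D HC)) big1 ?add0r => [|w _]; last by rewrite (mu2_0l HC) ?sscr0.
  by rewrite big1 // => w _; rewrite (mu2_0r HC) ?sscr0.
- by rewrite big1 ?add0r ?Hm1 // => w _; rewrite (mu2_0l HC) ?sscr0.
Qed.

Lemma mem0_cone_inr y s : ~~ all (@is_inr C0 C1) s -> 0 \in pairmap cone_m (inr y) s.
Proof.
elim: s y => [|[z|z] s IH] y //=; first by rewrite in_cons eqxx.
by move=> h; rewrite in_cons IH ?orbT.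
Qed.

Lemma mem0_cone_inl x s : ~~ cone_path s -> 0 \in pairmap cone_m (inl x) s.
Proof.
elim: s x => [|[z|z] s IH] x //= h; rewrite in_cons ?IH ?orbT //.
by rewrite mem0_cone_inr ?orbT.
Qed.

Definition psi_map B (V W : zmodType) (g : V -> seq C -> W) p (v : C0 -> V) (y : C1) : W :=
  \sum_(n < B) \sum_(u < n.+1) \sum_x wsum u (fun zs => \sum_w wsum (n - u) (fun ws =>
    if last w ws == y then
      ssc ((u : nat)%:Z + msgn ind0 p x zs + msgn ind1 (p - (u : nat)%:Z) w ws)
        (g (v x) (pairmap m0 x zs ++ tau (last x zs) w :: pairmap m1 w ws))
    else 0)).

Lemma Psi_psi_map (V : zmodType) (nu : V -> seq C -> V) p (v : {ffun C0 -> V}) y :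
  Psi ind0 ind1 m0 m1 tau nu p v y = psi_map (#|C0| + #|C1|) nu p v y.
Proof.
rewrite /Psi ffunE; apply: eq_bigr => n _; apply: eq_bigr => u _; apply: eq_bigr => x _.
rewrite -wsum_tuple; apply: eq_bigr => zs _; apply: eq_bigr => w _.
by rewrite big_mkcond -wsum_tuple.
Qed.

Lemma msgn_cone_inl q x a : msgn cone_ind q (inl x) (map inl a) = msgn ind0 (q - 1) x a.
Proof. by rewrite (@msgn_map _ _ (fun t => (ind0 t).+1)) ?msgn_indS. Qed.

Lemma msgn_cone_inr q x b : msgn cone_ind q (inr x) (map inr b) = msgn ind1 q x b.
Proof. exact: msgn_map. Qed.


Section ConeTwisted.
Variables (V W : zmodType) (g : V -> seq C -> W).
Hypothesis Hg : multiadd g.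

Lemma twisted_cone_inl N q (w : C0 + C1 -> V) y :
  twisted cone_ind cone_m N g q w (inl y) = twisted ind0 m0 N g (q - 1) (w \o inl) y.
Proof.
apply: eq_bigr => n _; rewrite big_sumType /= [X in _ + X]big1 ?addr0; last first.
  move=> x _; rewrite wsum_inr => [|s _ hs]; last first.
    by rewrite multiadd_eq0 ?sscr0 ?mem0_cone_inr //; case: ifP.
  by apply: wsum_eq0 => b _; rewrite last_map.
apply: eq_bigr => x _; rewrite wsum_inl_inr => [|s _ hs]; last first.
  by rewrite multiadd_eq0 ?sscr0 ?mem0_cone_inl //; case: ifP.
rewrite big_ord_recr /= subnn [X in X + _]big1 ?add0r => [|u _]; last first.
  apply: wsum_eq0 => a ha; apply: wsum_eq0 => -[|b0 b] hb; last by rewrite last_cat /= last_map.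
  by have := ltn_ord u; rewrite /= in hb; lia.
apply: eq_wsum => a _ /=; rewrite cats0 last_map msgn_cone_inl pairmap_map.
by case: (x =P y) => [->|/eqP ne]; rewrite ?eqxx // (inj_eq (@inl_inj _ _)) ?(negbTE ne).
Qed.

Lemma twisted_cone_inr N q (w : C0 + C1 -> V) y :
  twisted cone_ind cone_m N.+1 g q w (inr y) =
  ssc (q - 1) (psi_map N g (q - 1) (w \o inl) y) + twisted ind1 m1 N.+1 g q (w \o inr) y.
Proof.
rewrite /twisted; under eq_bigr do rewrite big_sumType.
rewrite big_split; congr (_ + _); last first.
  apply: eq_bigr => n _; apply: eq_bigr => x _; rewrite wsum_inr => [|s _ hs]; last first.
    by rewrite multiadd_eq0 ?sscr0 ?mem0_cone_inr //; case: ifP.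
  by apply: eq_wsum => b _; rewrite last_map (inj_eq (@inr_inj _ _)) msgn_cone_inr pairmap_map.
rewrite big_ord_recl big1 // [LHS]add0r /psi_map ssc_sum.
apply: eq_bigr => n _; rewrite ssc_sum; under [RHS]eq_bigr do rewrite ssc_sum.
rewrite [RHS]exchange_big; apply: eq_bigr => x _; rewrite lift0.
rewrite wsum_inl_inr => [|s _ hs]; last first.
  by rewrite multiadd_eq0 ?sscr0 ?mem0_cone_inl //; case: ifP.
rewrite big_ord_recr [wsum ord_max _]wsum_eq0 => [|a _]; last by rewrite subnn /= cats0 last_map.
rewrite [LHS]addr0.
apply: eq_bigr => u _; rewrite wsum_ssc; apply: eq_wsum => a ha.
have hu := ltn_ord u.
rewrite subSn // /= ssc_sum; apply: eq_bigr => z _; rewrite wsum_ssc; apply: eq_wsum => b hb.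
rewrite last_cat last_map /= last_map (inj_eq (@inr_inj _ _)).
case: ifP => _; last by rewrite sscr0.
rewrite pairmap_cat last_map /= !pairmap_map (additive_ssc (multiaddD_mid Hg _ _ _)) !sscA.
apply: ssc_parity; rewrite msgn_cat size_map ha last_map msgn_cons msgn_cone_inl msgn_cone_inr /=.
by rewrite (_ : q - (u : nat)%:Z - 1 = q - 1 - (u : nat)%:Z) ?intS; lia.
Qed.

Lemma eq_psi_map B p (v w : C0 -> V) y :
  (forall x, v x = w x) -> psi_map B g p v y = psi_map B g p w y.
Proof. by move=> h; do 3!apply: eq_bigr => ? _; rewrite h. Qed.

Lemma psi_mapD B p (v w : C0 -> V) y :
  psi_map B g p (fun x => v x + w x) y = psi_map B g p v y + psi_map B g p w y.
Proof.
rewrite /psi_map -big_split; apply: eq_bigr => n _ /=; rewrite -big_split; apply: eq_bigr => u _ /=.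
rewrite -big_split; apply: eq_bigr => x _ /=; rewrite -wsumD; apply: eq_wsum => zs _.
rewrite -big_split; apply: eq_bigr => w' _ /=; rewrite -wsumD; apply: eq_wsum => ws _.
by case: ifP => _; rewrite ?addr0 // (multiaddDl Hg) sscrD.
Qed.

End ConeTwisted.
End Cone.

Section Homotopy.
Variables (C : zmodType) (Chom : int -> C -> Prop) (mu1 : C -> C) (mu2 : C -> C -> C).
Hypothesis HC : Ainf_alg Chom mu1 mu2.
Variables (C0 C1 : finType) (ind0 : C0 -> nat) (ind1 : C1 -> nat)
  (m0 : C0 -> C0 -> C) (m1 : C1 -> C1 -> C) (tau : C0 -> C1 -> C).
Hypotheses (Hm0 : twisting_cocycle Chom mu1 mu2 ind0 m0)
  (Hm1 : twisting_cocycle Chom mu1 mu2 ind1 m1)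
  (Htau : tau_family Chom mu1 mu2 ind0 ind1 m0 m1 tau).
Variables (F : zmodType) (Fhom : int -> F -> Prop) (nuF : F -> seq C -> F)
  (G : zmodType) (Ghom : int -> G -> Prop) (nuG : G -> seq C -> G)
  (phi : F -> seq C -> G).
Hypotheses (HF : Ainf_module Chom mu1 mu2 Fhom nuF) (HG : Ainf_module Chom mu1 mu2 Ghom nuG).
Hypothesis Hphi : Ainf_morphism Chom mu1 mu2 Fhom nuF Ghom nuG phi.

Lemma psi_map_deg B p (v : C0 -> F) y : (forall x, Fhom (p - (ind0 x)%:Z) (v x)) ->
  Ghom (p + 1 - (ind1 y)%:Z) (psi_map ind0 ind1 m0 m1 tau B phi p v y).
Proof.
move=> hv; have HgG : graded Ghom by case: HG.
apply: (hom_sum HgG) => n _; apply: (hom_sum HgG) => u _; apply: (hom_sum HgG) => x _.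
apply: (hom_wsum HgG) => zs hzs.
apply: (hom_sum HgG) => w _; apply: (hom_wsum HgG) => ws hws.
apply: (hom_if HgG) => /eqP hy; apply: (hom_ssc HgG).
set qs := pairmap (fun a b => (ind0 a)%:Z - (ind0 b)%:Z - 1) x zs
   ++ ((ind0 (last x zs))%:Z - (ind1 w)%:Z)
   :: pairmap (fun a b => (ind1 a)%:Z - (ind1 b)%:Z - 1) w ws.
have hq : homs Chom qs (pairmap m0 x zs ++ tau (last x zs) w :: pairmap m1 w ws).
  apply/homs_cat/homs_cons; [exact: homs_pairmap (proj1 Hm0) | exact: (proj1 Htau) |].
  exact: homs_pairmap (proj1 Hm1).
apply: (hom_eq ((proj1 (proj2 Hphi)) _ _ _ _ (hv x) hq)).
rewrite /qs big_cat big_cons /= !sum_pairmap_deg size_cat /= !size_pairmap hy.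
by rewrite !PoszD; lia.
Qed.

(* The [inr]-component of the chain map [phi~] on the twisted complex of the cone. *)
Lemma psi_map_homotopy B p (v : C0 -> F) y : (#|C0| + #|C1| <= B)%N ->
  (forall x, Fhom (p - (ind0 x)%:Z) (v x)) ->
  psi_map ind0 ind1 m0 m1 tau B nuG p (twisted ind0 m0 B.+1 phi p v) y
  - twisted ind1 m1 B.+1 phi p (psi_map ind0 ind1 m0 m1 tau B nuF p v) y
  = twisted ind1 m1 B.+1 nuG (p + 1) (fun x => - psi_map ind0 ind1 m0 m1 tau B phi p v x) y
  - psi_map ind0 ind1 m0 m1 tau B phi (p - 1) (twisted ind0 m0 B.+1 nuF p v) y.
Proof.
move=> hB hv.
have Hph : multiadd phi by case: Hphi.
have [[HgF [HnF _]] [_ [HnG _]]] := (HF, HG).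
pose v' (t : C0 + C1) := if t is inl x then v x else 0.
have hv' t : Fhom (p + 1 - (cone_ind ind0 ind1 t)%:Z) (v' t).
  by case: t => [x|x] /=; [apply: (hom_eq (hv x)); rewrite intS; lia | apply: hom0].
have hN : (#|{: C0 + C1}| < B.+1)%N by rewrite card_sum.
have := twisted_chain_map HC (cone_twisting_cocycle HC Hm0 Hm1 Htau) HnF HnG Hphi (inr y) hN hv'.
rewrite !twisted_cone_inr // !addrK.
have cone_inl_v (g : F -> seq C -> _) : multiadd g -> forall x,
    twisted (cone_ind ind0 ind1) (cone_m ind0 m0 m1 tau) B.+1 g (p + 1) v' (inl x)
    = twisted ind0 m0 B.+1 g p v x.
  by move=> Hg x; rewrite twisted_cone_inl // addrK.
have cone_inr_v (g : F -> seq C -> _) : multiadd g -> forall x,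
    twisted (cone_ind ind0 ind1) (cone_m ind0 m0 m1 tau) B.+1 g (p + 1) v' (inr x)
    = ssc p (psi_map ind0 ind1 m0 m1 tau B g p v x).
  move=> Hg x; rewrite twisted_cone_inr // addrK.
  by rewrite (@eq_twisted _ _ ind1 m1 _ _ _ _ _ _ (fun _ => 0)) // twisted0 // addr0.
rewrite (eq_psi_map _ _ _ _ _ _ _ _ _ (cone_inl_v _ _ Hph)).
rewrite (eq_psi_map _ _ _ _ _ _ _ _ _ (cone_inl_v _ _ HnF)).
rewrite (eq_twisted _ _ _ _ _ _ (cone_inr_v _ _ Hph)) (eq_twisted _ _ _ _ _ _ (cone_inr_v _ _ HnF)).
rewrite !twisted_ssc //; move/(congr1 (ssc p)).
rewrite !sscrD !sscK sscA (@ssc_parity _ _ 1) ?ssc1 => [h|]; last by lia.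
rewrite twistedN // -[X in X - _](addrK (twisted ind1 m1 B.+1 nuG (p + 1)
  (psi_map ind0 ind1 m0 m1 tau B phi p v) y)) h.
by rewrite addrAC addrK addrC.
Qed.

End Homotopy.


Unset Implicit Arguments.
Theorem proposition5p19
  (C : zmodType) (Chom : int -> C -> Prop) (mu1 : C -> C) (mu2 : C -> C -> C)
  (HC : Ainf_alg Chom mu1 mu2)
  (C0 C1 : finType) (ind0 : C0 -> nat) (ind1 : C1 -> nat)
  (m0 : C0 -> C0 -> C) (m1 : C1 -> C1 -> C) (tau : C0 -> C1 -> C)
  (Hm0 : twisting_cocycle Chom mu1 mu2 ind0 m0)
  (Hm1 : twisting_cocycle Chom mu1 mu2 ind1 m1)
  (Htau : tau_family Chom mu1 mu2 ind0 ind1 m0 m1 tau)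
  (F : zmodType) (Fhom : int -> F -> Prop) (nuF : F -> seq C -> F)
  (G : zmodType) (Ghom : int -> G -> Prop) (nuG : G -> seq C -> G)
  (HF : Ainf_module Chom mu1 mu2 Fhom nuF)
  (HG : Ainf_module Chom mu1 mu2 Ghom nuG)
  (phi : F -> seq C -> G)
  (Hphi : Ainf_morphism Chom mu1 mu2 Fhom nuF Ghom nuG phi) :
  exists H : int -> {ffun C0 -> F} -> {ffun C1 -> G},
    (forall p v w, deg_el ind0 Fhom p v -> deg_el ind0 Fhom p w ->
       H p (v + w) = H p v + H p w) /\
    (forall p v, deg_el ind0 Fhom p v -> deg_el ind1 Ghom (p + 1) (H p v)) /\
    (forall p v, deg_el ind0 Fhom p v ->
       Psi ind0 ind1 m0 m1 tau nuG p (tw ind0 m0 phi p v)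
       - tw ind1 m1 phi p (Psi ind0 ind1 m0 m1 tau nuF p v)
       = tw ind1 m1 nuG (p + 1) (H p v) + H (p - 1) (tw ind0 m0 nuF p v)).
Proof.
pose B := (#|C0| + #|C1|)%N.
have Hph : multiadd phi by case: Hphi.
have [[_ [HnF _]] [HgG [HnG _]]] := (HF, HG).
have hB0 : (#|C0| < B.+1)%N by rewrite ltnS leq_addr.
have hB1 : (#|C1| < B.+1)%N by rewrite ltnS leq_addl.
exists (fun p v => [ffun y => - psi_map ind0 ind1 m0 m1 tau B phi p v y]).
split; [|split].
- move=> p v w _ _; apply/ffunP => y; rewrite !ffunE -opprD -psi_mapD //.
  by congr -%R; apply: eq_psi_map => x; rewrite ffunE.
- by move=> p v hv y; rewrite ffunE; apply/(homN HgG)/(psi_map_deg Hm0 Hm1 Htau HG Hphi).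
move=> p v hv; apply/ffunP => y.
have ffunD (f g : {ffun C1 -> G}) : (f + g) y = f y + g y by rewrite !ffunE.
have ffunB (f g : {ffun C1 -> G}) : (f - g) y = f y - g y by rewrite !ffunE.
rewrite ffunB ffunD [X in _ = _ + X]ffunE Psi_psi_map.
rewrite !(tw_twisted_trunc HC (proj1 Hm1) _ (N := B.+1)) //.
under eq_psi_map => x do rewrite (tw_twisted_trunc HC (proj1 Hm0) _ (N := B.+1)) //.
under [in RHS]eq_psi_map => x do rewrite (tw_twisted_trunc HC (proj1 Hm0) _ (N := B.+1)) //.
under eq_twisted => x do rewrite Psi_psi_map.
under [in RHS]eq_twisted => x do rewrite ffunE.
exact: (psi_map_homotopy HC Hm0 Hm1 Htau HF HG Hphi y (leqnn B) hv).
Qed.
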